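(* Consider an asynchronous shared-memory system of $n$ processes in which up to $t$ processes may crash, with $n > 2t$. For every integer $k > \frac{n-t}{n-2t}$, algorithm $\mathcal{A}_3$ (described in the context) solves $k$-set agreement.
   Context: $k$-set agreement (decisions allowed in $V\cup\{\bot\}$, $\bot$ counting as a decided value): each process proposes an initial value from a set $V$; (Validity) if all correct processes propose the same value $v$, no correct process decides a value different from $v$; (Agreement) at most $k$ distinct values are decided by correct processes; (Termination) every correct process eventually decides. A crashed process stops taking steps; a correct process never crashes. Model: processes communicate through an atomic snapshot object $S$ with one entry per process (initially all $\bot$), supporting $\mathrm{update}(m)$ (process $p_i$ writes $m$ into its own entry) and $\mathrm{snapshot}()$ (returns the vector of all entries), both atomic (linearizable) and wait-free. Asynchronous: no timing bounds. Algorithm $\mathcal{A}_3$, code of $p_i$ with initial value $m$: $p_i$ performs $S.\mathrm{update}(m)$, then repeatedly calls $L_i := S.\mathrm{snapshot}()$ until $L_i$ has at least $n-t$ non-$\bot$ entries; it sets $X_i := L_i$ and $x_i :=$ number of non-$\bot$ entries of $X_i$. If at least $x_i - t$ entries of $X_i$ equal $m$, it decides $m$; else, if some value $v$ has at least $x_i - t$ entries in $X_i$ equal to it, it decides such a $v$; else it decides $\bot$. *)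

(* Model of algorithm A_3 in an asynchronous shared-memory
   system with an atomic snapshot object, as an interleaving of atomic steps. *)
From mathcomp Require Import all_boot.
Set Implicit Arguments. Unset Strict Implicit. Unset Printing Implicit Defensive.

Section A3.
Variables (n t : nat) (V : eqType).

(* Local control state of a process; [Done d] records the decided value,
   with [None] standing for bottom. *)
Inductive phase := Init | Scan | Done of option V.

(* Global configuration: the snapshot object S (None = bottom) and the
   local phases of all processes. *)
Record config := Config { mem : 'I_n -> option V; loc : 'I_n -> phase }.

Definition init_config : config := Config (fun _ => None) (fun _ => Init).

Definition nonbot (L : 'I_n -> option V) : nat := #|[pred j | L j != None]|.
Definition cnt (L : 'I_n -> option V) (v : V) : nat := #|[pred j | L j == Some v]|.

Definition decision_ok (L : 'I_n -> option V) (m : V) (d : option V) : Prop :=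
  let x := nonbot L in
  if x - t <= cnt L m then d = Some m
  else (exists v, d = Some v /\ x - t <= cnt L v)
       \/ (d = None /\ forall v, cnt L v < x - t).

Definition step (prop : 'I_n -> V) (i : 'I_n) (c c' : config) : Prop :=
  (forall j, j != i -> loc c' j = loc c j) /\
  match loc c i with
  | Init => (forall j, mem c' j = if j == i then Some (prop i) else mem c j)
            /\ loc c' i = Scan
  | Scan => (forall j, mem c' j = mem c j) /\
            (if n - t <= nonbot (mem c)
             then exists d, decision_ok (mem c) (prop i) d /\ loc c' i = Done d
             else loc c' i = Scan)
  | Done _ => (forall j, mem c' j = mem c j) /\ loc c' i = loc c i
  end.

Definition execution (prop : 'I_n -> V) (sched : nat -> 'I_n) (conf : nat -> config) : Prop :=
  conf 0 = init_config /\ forall s, step prop (sched s) (conf s) (conf s.+1).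

Definition correct (sched : nat -> 'I_n) (i : 'I_n) : Prop :=
  forall N, exists s, N <= s /\ sched s = i.

Definition at_most_t_crashes (sched : nat -> 'I_n) : Prop :=
  exists F : {set 'I_n}, #|F| <= t /\ forall i, i \notin F -> correct sched i.

Definition decides (conf : nat -> config) (i : 'I_n) (d : option V) : Prop :=
  exists s, loc (conf s) i = Done d.

Definition validity (prop : 'I_n -> V) (sched : nat -> 'I_n) (conf : nat -> config) : Prop :=
  forall v, (forall i, correct sched i -> prop i = v) ->
  forall i d, correct sched i -> decides conf i d -> d = Some v.

Definition agreement (k : nat) (sched : nat -> 'I_n) (conf : nat -> config) : Prop :=
  exists D : seq (option V), size D <= k /\
    forall i d, correct sched i -> decides conf i d -> d \in D.

Definition termination (sched : nat -> 'I_n) (conf : nat -> config) : Prop :=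
  forall i, correct sched i -> exists d, decides conf i d.

Definition solves_set_agreement (k : nat) : Prop :=
  forall (prop : 'I_n -> V) sched conf,
    execution prop sched conf -> at_most_t_crashes sched ->
    [/\ validity prop sched conf, agreement k sched conf & termination sched conf].
End A3.

From Pilot Require Import Defs.
From mathcomp Require Import all_boot zify.
Set Implicit Arguments. Unset Strict Implicit. Unset Printing Implicit Defensive.

(* The shared memory only grows, and entry j holds either bottom
   or p_j's proposal. Validity: a deciding snapshot has x >= n - t entries, of
   which at most t come from processes proposing something else than v, so v
   occurs at least x - t times and the process decides its own value v.
   Agreement: let L0 be the first memory state with x0 >= n - t entries. A
   value v decided from a later snapshot L with x entries occurs x - t times
   in L, and L has only x - x0 entries more than L0, so v occurs at least
   x0 - t >= n - 2t times in L0. Hence at most x0 / (x0 - t) < k values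
   besides bottom can be decided. Termination: once all correct processes
   have written, every snapshot has n - t entries, and the next step of a
   correct process makes it decide. *)

(* ssrbool's [mem] shadows [Defs.mem]. *)
Local Notation memory := Defs.mem.

Lemma card_predU_le (T : finType) (A B : {pred T}) : #|[predU A & B]| <= #|A| + #|B|.
Proof. by rewrite -cardUI leq_addr. Qed.

Lemma lt_of_heavy_count (n t k x m : nat) :
  n - t < k * (n - 2 * t) -> n - t <= x -> m * (x - t) <= x -> m < k.
Proof.
move=> quorum_k le_x heavy; rewrite ltnNge; apply/negP => le_km.
have k_gt0 : 0 < k by case: k quorum_k le_km.
have split_x : k * (x - t) = k * (n - 2 * t) + k * (x - (n - t)).
  by rewrite -mulnDr; congr (_ * _); lia.
have := leq_pmull (x - (n - t)) k_gt0.
have := leq_mul le_km (leqnn (x - t)).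
lia.
Qed.

Definition eventually (P : nat -> Prop) := exists T, forall s, T <= s -> P s.

Lemma eventually_all (I : eqType) (r : seq I) (P : I -> nat -> Prop) :
  (forall i, i \in r -> eventually (P i)) -> eventually (fun s => forall i, i \in r -> P i s).
Proof.
elim: r => [_|i r IH ev_r]; first by exists 0.
have [T1 ev_i] := ev_r i (mem_head _ _).
have [T2 ev_rest] : eventually (fun s => forall j, j \in r -> P j s).
  by apply: IH => j r_j; apply: ev_r; rewrite inE r_j orbT.
exists (maxn T1 T2) => s; rewrite geq_max => /andP [le1 le2] j.
by rewrite inE => /predU1P [->|]; [exact: ev_i | exact: ev_rest].
Qed.

Section Snapshots.
Variables (n t : nat) (V : eqType).
Implicit Types (L K : 'I_n -> option V) (v : V).

Definition mem_le K L := forall j x, K j = Some x -> L j = Some x.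

Lemma nonbot_le_cnt_add L v (F : {pred 'I_n}) :
  (forall j, j \notin F -> L j != None -> L j = Some v) -> nonbot L <= cnt L v + #|F|.
Proof.
move=> outside_F; apply: leq_trans (card_predU_le _ _); apply: subset_leq_card.
apply/subsetP => j; rewrite !inE; case: (boolP (j \in F)) => [|/outside_F]; first by rewrite orbT.
by rewrite orbF => Lj_v /Lj_v ->.
Qed.

(* Entries of L equal to v were either v already in K, or new. *)
Lemma cnt_add_nonbot_mono K L v :
  mem_le K L -> cnt L v + nonbot K <= cnt K v + nonbot L.
Proof.
move=> le_L; pose fresh := [pred j | (L j != None) && (K j == None)].
have cnt_L : cnt L v <= cnt K v + #|fresh|.
  apply: leq_trans (card_predU_le [pred j | K j == Some v] fresh).
  apply: subset_leq_card; apply/subsetP => j; rewrite !inE => /eqP Lj; rewrite Lj /=.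
  by case E: (K j) => [x|] //; rewrite -Lj (le_L _ _ E) eqxx.
have nonbot_L : nonbot K + #|fresh| = nonbot L.
  rewrite /nonbot -(cardID [pred j | K j != None] [pred j | L j != None]).
  congr (_ + _); apply: eq_card => j; rewrite !inE; last by rewrite negbK andbC.
  by case E: (K j) => [x|]; rewrite ?(le_L _ _ E) ?andbF.
lia.
Qed.

Lemma heavy_mono K L v : mem_le K L -> nonbot L - t <= cnt L v -> nonbot K - t <= cnt K v.
Proof. by move=> le_L; have := cnt_add_nonbot_mono v le_L; lia. Qed.

Lemma sum_cnt (L : 'I_n -> option V) (s : seq V) :
  uniq s -> \sum_(v <- s) cnt L v = #|[pred j | L j \in map Some s]|.
Proof.
elim: s => [_|v s IH /andP [v_notin_s /IH {}IH]]; first by rewrite big_nil card0.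
rewrite big_cons IH -(cardID [pred j | L j == Some v] [pred j | L j \in map Some (v :: s)]).
congr (_ + _).
  by apply: eq_card => j; rewrite !inE; case: eqP; rewrite ?andbF.
apply: eq_card => j; rewrite !inE; case: eqP => [->|_] //=.
by rewrite (mem_map Some_inj) (negbTE v_notin_s).
Qed.

Lemma size_heavy_le L (s : seq V) c :
  uniq s -> (forall v, v \in s -> c <= cnt L v) -> size s * c <= nonbot L.
Proof.
move=> uniq_s heavy; rewrite -sum1_size big_distrl /= mul1n big_seq.
apply: (@leq_trans (\sum_(v <- s | v \in s) cnt L v)); first exact: leq_sum.
rewrite -big_seq sum_cnt //.
apply: subset_leq_card; apply/subsetP => j; rewrite !inE.
by apply: contraTN => /eqP ->; apply/mapP => -[].
Qed.

Lemma decision_ok_own L m d : nonbot L - t <= cnt L m -> decision_ok t L m d -> d = Some m.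
Proof. by rewrite /decision_ok => ->. Qed.

Lemma decision_okP L m d : decision_ok t L m d ->
  d = None \/ exists2 v, d = Some v & nonbot L - t <= cnt L v.
Proof.
rewrite /decision_ok; case: ifP => [heavy_m ->|_ [[v [-> heavy_v]]|[-> _]]].
- by right; exists m.
- by right; exists v.
- by left.
Qed.

End Snapshots.

Section Step.
Variables (n t : nat) (V : eqType) (prop : 'I_n -> V).
Implicit Types (c : config n V) (i j : 'I_n).

Definition started (p : phase V) : bool := if p is Init then false else true.

Lemma step_loc i c c' j : step t prop i c c' -> j != i -> loc c' j = loc c j.
Proof. by case=> loc_c' _; apply: loc_c'. Qed.

Lemma step_started i c c' : step t prop i c c' -> started (loc c' i).
Proof.
case=> _; case: (loc c i) => [|| d] [_]; [by move-> | | by move->].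
by case: ifP => _ => [[d [_ ->]]|->].
Qed.

Lemma step_memory i c c' j : step t prop i c c' ->
  memory c' j = if (j == i) && ~~ started (loc c i) then Some (prop i) else memory c j.
Proof. by case=> _; case: (loc c i) => [|| d] [->]; rewrite /= ?andbT ?andbF. Qed.

Lemma step_done i c c' j d : step t prop i c c' -> loc c' j = Done d ->
  loc c j = Done d \/ n - t <= nonbot (memory c) /\ decision_ok t (memory c) (prop j) d.
Proof.
move=> st; have [-> | /(step_loc st) ->] := eqVneq j i; last by left.
case: st => _; case: (loc c i) => [|| d'] [_].
- by move=> ->.
- by case: ifP => [quorum [d0 [ok ->]] [<-] | _ ->]; [right | ].
- by move=> -> ->; left.
Qed.

Lemma step_decides i c c' : step t prop i c c' -> started (loc c i) ->
  n - t <= nonbot (memory c) -> exists d, loc c' i = Done d.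
Proof.
case=> _; case: (loc c i) => [|| d] [_] // => [|->]; last by exists d.
by move=> + _ quorum; rewrite quorum => -[d [_ ->]]; exists d.
Qed.

End Step.

Section Execution.
Variables (n t : nat) (V : eqType) (prop : 'I_n -> V).
Variables (sched : nat -> 'I_n) (conf : nat -> config n V).
Hypothesis exec : execution t prop sched conf.

Lemma memoryE s j :
  memory (conf s) j = if started (loc (conf s) j) then Some (prop j) else None.
Proof.
have [conf0 steps] := exec; elim: s => [|s IH]; first by rewrite conf0.
have st := steps s; rewrite (step_memory j st) IH.
have [-> | ne_j] := eqVneq j (sched s).
  by rewrite (step_started st); case: started.
by rewrite (step_loc st ne_j).
Qed.

Lemma started_mono s s' j : s <= s' -> started (loc (conf s) j) -> started (loc (conf s') j).
Proof.
move=> /subnK <-; elim: (s' - s) => [//|m IH] /IH; rewrite addSn.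
have st := exec.2 (m + s); have [-> _ | ne_j] := eqVneq j (sched (m + s)).
  exact: step_started st.
by rewrite (step_loc st ne_j).
Qed.

Lemma memory_mono s s' : s <= s' -> mem_le (memory (conf s)) (memory (conf s')).
Proof.
move=> le_s j x; rewrite !memoryE.
by case: ifP => // /(started_mono le_s) ->.
Qed.

Lemma decision_snapshot s i d : loc (conf s) i = Done d ->
  exists s0, n - t <= nonbot (memory (conf s0)) /\ decision_ok t (memory (conf s0)) (prop i) d.
Proof.
have [conf0 steps] := exec; elim: s => [|s IH]; first by rewrite conf0.
by case/(step_done (steps s)) => [/IH|]; last exists s.
Qed.

Lemma eventually_started i : correct sched i -> eventually (fun s => started (loc (conf s) i)).
Proof.
move=> correct_i; have [s [_ sched_s]] := correct_i 0.
exists s.+1 => s' /started_mono; apply.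
by rewrite -sched_s; apply: step_started (exec.2 s).
Qed.

Lemma eventually_quorum : at_most_t_crashes t sched ->
  eventually (fun s => n - t <= nonbot (memory (conf s))).
Proof.
move=> [F [card_F correct_F]].
have [T all_started] : eventually (fun s => forall i, i \in enum (~: F) -> started (loc (conf s) i)).
  by apply: eventually_all => i; rewrite mem_enum inE => /correct_F /eventually_started.
exists T => s le_T; apply: (@leq_trans #|~: F|).
  by have := cardsC F; rewrite card_ord; lia.
apply: subset_leq_card; apply/subsetP => j; rewrite !inE memoryE => j_notin_F.
by rewrite all_started // mem_enum inE.
Qed.

Lemma A3_validity : at_most_t_crashes t sched -> validity prop sched conf.
Proof.
move=> [F [card_F correct_F]] v correct_v i d correct_i [s /decision_snapshot [s0 [_ ok]]].
rewrite -(correct_v i correct_i); apply: decision_ok_own ok.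
suff : nonbot (memory (conf s0)) <= cnt (memory (conf s0)) v + #|F|.
  by rewrite (correct_v i correct_i); lia.
apply: nonbot_le_cnt_add => j /correct_F /correct_v <-.
by rewrite memoryE; case: started.
Qed.

Lemma A3_agreement k : 2 * t < n -> n - t < k * (n - 2 * t) ->
  at_most_t_crashes t sched -> agreement k sched conf.
Proof.
move=> nt quorum_k /eventually_quorum [T quorum].
have ex_quorum : exists s, n - t <= nonbot (memory (conf s)) by exists T; apply: quorum.
have [s0 quorum0 first_quorum] := ex_minnP ex_quorum.
set L0 := memory (conf s0) in quorum0 *.
pose heavy := [seq v <- undup (pmap L0 (enum 'I_n)) | nonbot L0 - t <= cnt L0 v].
exists (None :: map Some heavy); split.
  rewrite /= size_map; apply: lt_of_heavy_count quorum_k quorum0 _.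
  apply: size_heavy_le; first by rewrite filter_uniq ?undup_uniq.
  by move=> v; rewrite mem_filter => /andP [].
move=> i d _ [s /decision_snapshot [s1 [quorum1 /decision_okP [-> | [v -> heavy_v]]]]].
  exact: mem_head.
have {}heavy_v : nonbot L0 - t <= cnt L0 v :=
  heavy_mono (memory_mono (first_quorum _ quorum1)) heavy_v.
rewrite inE /= mem_map; last exact: Some_inj.
rewrite mem_filter heavy_v mem_undup mem_pmap /=.
have /card_gt0P [j] : 0 < cnt L0 v by lia.
by rewrite inE => /eqP <-; apply: map_f; rewrite mem_enum.
Qed.

Lemma A3_termination : at_most_t_crashes t sched -> termination sched conf.
Proof.
move=> crashes i correct_i; have [T quorum] := eventually_quorum crashes.
have [Ti started_i] := eventually_started correct_i.
have [s [+ sched_s]] := correct_i (maxn T Ti); rewrite geq_max => /andP [leT leTi].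
have st := exec.2 s; rewrite sched_s in st.
by have [d done_d] := step_decides st (started_i s leTi) (quorum s leT); exists d, s.+1.
Qed.

End Execution.

Theorem theorem6 (n t k : nat) (V : eqType) :
  2 * t < n -> n - t < k * (n - 2 * t) ->
  solves_set_agreement n t V k.
Proof.
move=> nt quorum_k prop sched conf exec crashes; split.
- exact: (A3_validity exec crashes).
- exact: (A3_agreement exec nt quorum_k crashes).
- exact: (A3_termination exec crashes).
Qed.
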